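(* Let $G$ be a graph with $m\ge1$ edges, let $k\ge 0$ and $0\le p\le m$ be integers, $\ell=m-p$, $\eta\ge1$, and $E=E(G,\eta)$ as in the context. If $G$ has a set $U\subseteq V(G)$ with $|U|\le k$ incident to at least $p$ edges, then there is a decision tree $T$ with $|T|=dep(T)\le k$ and $|O(T,E)|\le\ell\eta$.
   Context: Fix an ordering $e_1,\dots,e_m$ of $E(G)$. For a positive integer $\eta$, $E(G,\eta)$ has features $V(G)\cup\{d_0\}$ and, for each $r\in[\eta]$ and $i\in[m]$: a negative example with $d_0=2m(r-1)+2i-1$ and, for each $v\in V(G)$, value $1$ if $v$ is an endpoint of $e_i$ and $0$ otherwise; and a positive example with $d_0=2m(r-1)+2i$ and value $0$ on every vertex feature. A decision tree (DT) is a rooted tree whose test nodes $v$ carry a feature $f(v)$ and integer threshold $\lambda(v)$ (examples with $e(f(v))\le\lambda(v)$ go left, others right) and whose leaves are labeled positive or negative. $|T|$ = number of test nodes; $dep(T)$ = maximum number of test nodes on a root-to-leaf path. An example is an outlier for $T$ if it reaches a leaf with the opposite label; $O(T,E)$ is the set of outliers. *)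

From mathcomp Require Import all_boot all_order all_algebra.
Set Implicit Arguments. Unset Strict Implicit. Unset Printing Implicit Defensive.
Import Order.TTheory GRing.Theory Num.Theory.

(* A finite simple graph on vertex type V is given by the list of its edges,
   in a fixed order e_1,...,e_m: each edge is a 2-element vertex set, and no
   edge is repeated. *)
Definition simple_graph (V : finType) (es : seq {set V}) : Prop :=
  uniq es /\ (forall e, e \in es -> #|e| = 2).

(* Features: Some v for a vertex feature v, None for the extra feature d_0. *)
Definition example (V : finType) := ((option V -> int) * bool)%type.
(* label: true = positive, false = negative *)

Inductive dtree (F : Type) :=
| Leaf of bool
| Node of F & int & dtree F & dtree F.
Arguments Leaf {F}.

Fixpoint dsize F (t : dtree F) : nat :=
  match t with Leaf _ => 0 | Node _ _ l r => (dsize l + dsize r).+1 end.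

Fixpoint ddepth F (t : dtree F) : nat :=
  match t with Leaf _ => 0 | Node _ _ l r => (maxn (ddepth l) (ddepth r)).+1 end.

Fixpoint classify F (t : dtree F) (x : F -> int) : bool :=
  match t with
  | Leaf b => b
  | Node f lam l r => if (x f <= lam)%R then classify l x else classify r x
  end.

Definition is_outlier F (t : dtree F) (ex : (F -> int) * bool) : bool :=
  classify t ex.1 != ex.2.

Definition num_outliers F (t : dtree F) (E : seq ((F -> int) * bool)) : nat :=
  count (is_outlier t) E.

(* The instance E(G, eta); r ranges over [eta], i over [m] (1-based). *)
Definition EG (V : finType) (es : seq {set V}) (eta : nat) : seq (example V) :=
  let m := size es in
  flatten [seq flatten [seq
     [:: ((fun f : option V => match f with
            | None => Posz (2 * m * (r - 1) + 2 * i - 1)%N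
            | Some v => Posz (if v \in nth set0 es (i - 1) then 1 else 0)%N end), false);
         ((fun f : option V => match f with
            | None => Posz (2 * m * (r - 1) + 2 * i)%N
            | Some v => Posz 0 end), true)]
     | i <- iota 1 m] | r <- iota 1 eta].

Definition n_incident (V : finType) (es : seq {set V}) (U : {set V}) : nat :=
  count (fun e : {set V} => [exists v in U, v \in e]) es.

From mathcomp Require Import all_boot all_order all_algebra.
Set Implicit Arguments. Unset Strict Implicit.

(* Test the vertices of U one after the other: an example whose value on some
   u in U is positive is declared negative, all others positive. Positive
   examples are zero on every vertex, so they are never outliers, and the
   negative example of an edge e is an outlier exactly when e misses U. Hence
   each of the eta rounds of E(G, eta) contributes m - n_incident(U) <= m - p
   outliers, and the tree is a path with |U| <= k test nodes. *)

Section ZeroTestTree.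

Variable V : finType.

Definition zero_test_tree (s : seq V) : dtree (option V) :=
  foldr (fun u t => Node (Some u) 0%R t (Leaf false)) (Leaf true) s.

Lemma dsize_zero_test_tree (s : seq V) : dsize (zero_test_tree s) = size s.
Proof. by elim: s => //= u s ->; rewrite addn0. Qed.

Lemma ddepth_zero_test_tree (s : seq V) : ddepth (zero_test_tree s) = size s.
Proof. by elim: s => //= u s ->; rewrite maxn0. Qed.

Lemma classify_zero_test_tree (s : seq V) (x : option V -> int) :
  classify (zero_test_tree s) x = all (fun u => x (Some u) <= 0)%R s.
Proof. by elim: s => //= u s IH; case: ifP => //= _; rewrite IH. Qed.

End ZeroTestTree.

Section Instance.

Variables (V : finType) (es : seq {set V}).

Definition neg_example (r i : nat) : example V :=
  ((fun f : option V => match f with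
      | None => Posz (2 * size es * (r - 1) + 2 * i - 1)%N
      | Some v => Posz (if v \in nth set0 es (i - 1) then 1 else 0)%N end),
   false).

Definition pos_example (r i : nat) : example V :=
  ((fun f : option V => match f with
      | None => Posz (2 * size es * (r - 1) + 2 * i)%N
      | Some v => Posz 0 end),
   true).

Lemma EGE (eta : nat) :
  EG es eta = flatten [seq flatten [seq [:: neg_example r i; pos_example r i]
                                   | i <- iota 1 (size es)] | r <- iota 1 eta].
Proof. by []. Qed.

Lemma map_nth_pred_iota1 : [seq nth set0 es (i - 1) | i <- iota 1 (size es)] = es.
Proof.
rewrite (iotaDl 1 0) -map_comp -[RHS](mkseq_nth set0 es).
by apply: eq_map => i /=; rewrite add1n subn1.
Qed.

Lemma count_EG (a : pred (example V)) (q : pred {set V}) (eta : nat) :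
  (forall r i, a (pos_example r i) = false) ->
  (forall r i, a (neg_example r i) = q (nth set0 es (i - 1))) ->
  count a (EG es eta) = eta * count q es.
Proof.
move=> a_pos a_neg; rewrite EGE count_flatten -map_comp.
have round r : count a (flatten [seq [:: neg_example r i; pos_example r i]
                               | i <- iota 1 (size es)]) = count q es.
  rewrite count_flatten -map_comp -[in RHS]map_nth_pred_iota1 count_map -sumn_count.
  by congr sumn; apply: eq_map => i /=; rewrite a_pos a_neg !addn0.
rewrite (eq_map (g := fun=> count q es)) => [|r /=]; last exact: round.
by elim: eta 1 => //= n IHn j; rewrite IHn mulSn.
Qed.

End Instance.

Lemma num_outliers_zero_test_tree (V : finType) (es : seq {set V}) (U : {set V})
    (eta : nat) :
  num_outliers (zero_test_tree (enum U)) (EG es eta)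
  = eta * (size es - n_incident es U).
Proof.
rewrite /num_outliers (count_EG _ (q := predC (fun e : {set V} =>
                                       [exists v in U, v \in e]))).
- by rewrite -(count_predC (fun e : {set V} => [exists v in U, v \in e]) es) addKn.
- move=> r i; rewrite /is_outlier classify_zero_test_tree /=.
  by apply/negbF/eqP/allP => u _.
move=> r i; rewrite /is_outlier classify_zero_test_tree /= eqbF_neg negbK.
apply/allP/negP => [U0 /existsP [v /andP [vU ve]] | noU v].
  by have := U0 v; rewrite mem_enum ve => /(_ vU).
rewrite mem_enum => vU; case: ifP => // ve.
by case: noU; apply/existsP; exists v; rewrite vU.
Qed.

Theorem lemma1 (V : finType) (es : seq {set V}) (k p eta : nat) :
  simple_graph es ->
  (1 <= size es)%N ->
  (p <= size es)%N ->
  (1 <= eta)%N ->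
  (exists U : {set V}, (#|U| <= k)%N /\ (p <= n_incident es U)%N) ->
  exists T : dtree (option V),
    dsize T = ddepth T /\ (ddepth T <= k)%N /\
    (num_outliers T (EG es eta) <= (size es - p) * eta)%N.
Proof.
move=> _ _ _ _ [U [cardU incU]].
exists (zero_test_tree (enum U)).
rewrite dsize_zero_test_tree ddepth_zero_test_tree -cardE.
split=> //; split=> //.
by rewrite num_outliers_zero_test_tree mulnC leq_mul2r leq_sub2l ?orbT.
Qed.
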